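(* Let $a,b,v$ be integers with $b>a\ge2$ and $v\ge2$, let $u=3$, and set $X:=ab-a-b$. Then $a,b,u,v$ satisfy (1) $a$, $b$ and $3v-1$ are pairwise coprime; (2) $\frac{1}{a}+\frac{1}{b}+\frac{v}{3v-1}>1$; (3) $vab-1=(3v-1)X$, if and only if the triple $(a,b,3v-1)$ is one of $(2,9,5)$, $(2,7,11)$. *)

From mathcomp Require Import all_boot all_order all_algebra.
Set Implicit Arguments. Unset Strict Implicit. Unset Printing Implicit Defensive.
Import Order.TTheory GRing.Theory Num.Theory.
Local Open Scope ring_scope.

Definition cond_abuv (a b u v : int) : Prop :=
  let c := u * v - 1 in
  let X := a * b - a - b in
  [/\ coprimez a b, coprimez a c, coprimez b c,
      (1 / a%:~R + 1 / b%:~R + v%:~R / c%:~R > (1 : rat))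
    & v * a * b - 1 = c * X].

From mathcomp Require Import all_boot all_order all_algebra.
From mathcomp Require Import zify ring.
Import Order.TTheory GRing.Theory Num.Theory.
Local Open Scope ring_scope.

(* Only condition (3) is needed for the forward direction.  It rearranges to
   v (2ab - 3a - 3b) = (a - 1)(b - 1) - 2, whose right-hand side is positive
   for 2 <= a < b except at (a, b) = (2, 3), so the bracket on the left is
   positive too.  Then v >= 2 gives 2 (2ab - 3a - 3b) <= (a - 1)(b - 1) - 2,
   that is (3a - 5)(3b - 5) <= 22, which forces a = 2 and b <= 9; with a = 2
   the equation reads v (b - 6) = b - 3, solvable only for b = 7 and b = 9.
   Conversely the two solutions satisfy (1)-(3) by computation. *)

Lemma cond3E (R : comPzRingType) (a b v : R) :
  (v * a * b - 1 = (3 * v - 1) * (a * b - a - b)) <->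
  (v * (2 * a * b - 3 * a - 3 * b) = (a - 1) * (b - 1) - 2).
Proof.
have diffE : v * a * b - 1 - (3 * v - 1) * (a * b - a - b) =
             (a - 1) * (b - 1) - 2 - v * (2 * a * b - 3 * a - 3 * b) by ring.
split=> cond3; apply/eqP; rewrite -subr_eq0.
- by rewrite -oppr_eq0 opprB -diffE cond3 subrr.
- by rewrite diffE cond3 subrr.
Qed.

Section Cond3Solutions.

Variables a b v : int.
Hypotheses (a_ge2 : 2 <= a) (a_lt_b : a < b).
Hypothesis cond3 : v * (2 * a * b - 3 * a - 3 * b) = (a - 1) * (b - 1) - 2.

Lemma cond3_bracket_gt0 : 0 < v -> 0 < 2 * a * b - 3 * a - 3 * b.
Proof.
move=> v_gt0; case: (ltrP 0 (2 * a * b - 3 * a - 3 * b)) => // bracket_le0.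
have rhs_le0 : (a - 1) * (b - 1) - 2 <= 0 by rewrite -cond3; nia.
have [a2 b3] : a = 2 /\ b = 3 by nia.
by move: cond3 v_gt0; rewrite a2 b3; lia.
Qed.

Lemma cond3_solutions : 2 <= v -> (a, b, v) = (2, 9, 2) \/ (a, b, v) = (2, 7, 4).
Proof.
move=> v_ge2; have bracket_gt0 : 0 < 2 * a * b - 3 * a - 3 * b.
  by apply: cond3_bracket_gt0; lia.
have prod_le22 : (3 * a - 5) * (3 * b - 5) <= 22 by nia.
have a2 : a = 2.
  case: (lerP a 2) => [|a_gt2]; first lia.
  have : 4 * 7 <= (3 * a - 5) * (3 * b - 5) by apply: ler_pM; lia.
  lia.
have cond3_at2 : v * (b - 6) = b - 3 by move: cond3; rewrite a2; nia.
have [b_gt6 b_le9] : 6 < b /\ b <= 9 by move: bracket_gt0 prod_le22; rewrite a2; lia.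
rewrite a2; have [b7|[b8|b9]] : b = 7 \/ b = 8 \/ b = 9 by lia.
- by right; move: cond3_at2; rewrite b7 => ?; have -> : v = 4 by lia.
- by move: cond3_at2; rewrite b8; lia.
- by left; move: cond3_at2; rewrite b9 => ?; have -> : v = 2 by lia.
Qed.

End Cond3Solutions.

Lemma cond_abuv_2_9_2 : cond_abuv 2 9 3 2.
Proof. by split; vm_compute. Qed.

Lemma cond_abuv_2_7_4 : cond_abuv 2 7 3 4.
Proof. by split; vm_compute. Qed.

Theorem lemma3p7 (a b v : int) :
  2 <= a -> a < b -> 2 <= v ->
  (cond_abuv a b 3 v <->
   ((a, b, 3 * v - 1) = (2, 9, 5) \/ (a, b, 3 * v - 1) = (2, 7, 11))).
Proof.
move=> a_ge2 a_lt_b v_ge2; split.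
- case=> _ _ _ _ /cond3E cond3.
  by case: (@cond3_solutions a b v a_ge2 a_lt_b cond3 v_ge2) => -[-> -> ->]; [left|right].
- case=> -[-> -> c_eq].
  + have -> : v = 2 by lia.
    exact: cond_abuv_2_9_2.
  + have -> : v = 4 by lia.
    exact: cond_abuv_2_7_4.
Qed.
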